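(* Let $q$ be a prime power, $n=q^4-1$, and let $I_x$ be a cyclotomic coset of cardinality $2$ with minimal representative $x$. Then $I_x$ is an SR-asymmetric coset if and only if there exists $z\in I_x$ such that $n-qz<x$ (where $n-qz$ is reduced modulo $n$ into $\{0,\ldots,n-1\}$).
   Context: Identify $\mathbb{Z}_n$ with $\{0,\ldots,n-1\}$, all arithmetic modulo $n$. The cyclotomic coset of $x$ with respect to $q^2$ is $I_x=\{x,\,q^2x\bmod n\}$; its minimal representative is its least element. The (Hermitian) reciprocal coset of $I_x$ is $I_{n-qx}$. $I_x$ is symmetric if $I_{n-qx}=I_x$ and asymmetric otherwise. If $I_x$ is asymmetric with reciprocal coset $I_y$, with $x,y$ the minimal representatives and $x<y$, then $I_x$ is the FR-asymmetric coset and $I_y$ the SR-asymmetric coset of the pair. *)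

(* arithmetic on nat, elements of Z_n identified with {0,...,n-1}. *)
From mathcomp Require Import all_boot.
Set Implicit Arguments. Unset Strict Implicit. Unset Printing Implicit Defensive.

Definition coset (n q x : nat) : seq nat := undup [:: x %% n; (q ^ 2 * x) %% n].

Definition minrep (n q x : nat) : nat := minn (x %% n) ((q ^ 2 * x) %% n).

Definition recip (n q x : nat) : nat := (n - (q * x) %% n) %% n.

Definition symmetric_coset (n q x : nat) : Prop :=
  coset n q (recip n q x) =i coset n q x.

Definition asymmetric_coset (n q x : nat) : Prop := ~ symmetric_coset n q x.

Definition SR_asymmetric (n q x : nat) : Prop :=
  asymmetric_coset n q x /\ minrep n q (recip n q x) < minrep n q x.

(* The equivalence holds for every modulus n > 0 and every q.  Reciprocation z |-> n - qz commutes
   with multiplication by q^2, so it maps I_x onto its reciprocal coset I_y.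
   Hence some z in I_x has n - qz < x iff min I_y < x.  Finally min I_y < x =
   min I_x already forces I_y <> I_x, i.e. asymmetry. *)
From mathcomp Require Import all_boot.

Lemma mem_coset n q x z :
  z \in coset n q x = (z == x %% n) || (z == (q ^ 2 * x) %% n).
Proof. by rewrite /coset mem_undup !inE. Qed.

Lemma minrep_coset n q x : minrep n q x \in coset n q x.
Proof. by rewrite mem_coset /minrep /minn; case: ifP; rewrite eqxx ?orbT. Qed.

Lemma minrep_min n q x z : z \in coset n q x -> minrep n q x <= z.
Proof. by rewrite mem_coset => /orP[] /eqP ->; [exact: geq_minl | exact: geq_minr]. Qed.

Lemma recip_lt n q z : 0 < n -> recip n q z < n.
Proof. by move=> n0; rewrite /recip ltn_pmod. Qed.

Lemma recip_modn n q z : recip n q (z %% n) = recip n q z.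
Proof. by rewrite /recip modnMmr. Qed.

Lemma recipDmul_mod0 n q z : 0 < n -> (recip n q z + q * z) %% n = 0.
Proof.
move=> n0; rewrite /recip modnDml -modnDmr subnK ?modnn //.
by rewrite ltnW ?ltn_pmod.
Qed.

Lemma recip_unique n q z r : 0 < n -> r < n -> (r + q * z) %% n = 0 ->
  recip n q z = r.
Proof.
move=> n0 rn h; apply/eqP.
have : recip n q z + q * z == r + q * z %[mod n] by rewrite h recipDmul_mod0.
by rewrite eqn_modDr !modn_small ?recip_lt.
Qed.

Lemma recip_mulq2 n q z : 0 < n ->
  recip n q ((q ^ 2 * z) %% n) = (q ^ 2 * recip n q z) %% n.
Proof.
move=> n0; apply: recip_unique; rewrite ?ltn_pmod //.
rewrite modnDml -modnDmr modnMmr modnDmr mulnCA -mulnDr.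
by rewrite -modnMmr recipDmul_mod0 // muln0 mod0n.
Qed.

Lemma coset_recip n q x : 0 < n ->
  coset n q (recip n q x) =i map (recip n q) (coset n q x).
Proof.
move=> n0 w; rewrite (eq_mem_map (recip n q) (mem_undup _)) mem_coset /= !inE.
by rewrite recip_modn recip_mulq2 // modn_small ?recip_lt.
Qed.

Lemma recip_coset_ltP n q x m : 0 < n ->
  (exists z, z \in coset n q x /\ recip n q z < m) <->
  minrep n q (recip n q x) < m.
Proof.
move=> n0; split=> [[z [zx lt_zm]] | lt_m].
  by apply: leq_ltn_trans lt_zm; apply: minrep_min; rewrite coset_recip ?map_f.
have := minrep_coset n q (recip n q x).
by rewrite coset_recip // => /mapP [z zx e]; exists z; rewrite -e.
Qed.

Lemma SR_asymmetricE n q x :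
  SR_asymmetric n q x <-> minrep n q (recip n q x) < minrep n q x.
Proof.
split=> [[] // | lt_min]; split=> // sym.
have /minrep_min : minrep n q (recip n q x) \in coset n q x.
  by rewrite -sym minrep_coset.
by rewrite leqNgt lt_min.
Qed.

Theorem mainTheorem10 (p k q : nat) :
  prime p -> 0 < k -> q = p ^ k ->
  forall x : nat, x < q ^ 4 - 1 ->
    size (coset (q ^ 4 - 1) q x) = 2 ->
    minrep (q ^ 4 - 1) q x = x ->
    (SR_asymmetric (q ^ 4 - 1) q x <->
     exists z, z \in coset (q ^ 4 - 1) q x /\ recip (q ^ 4 - 1) q z < x).
Proof.
move=> _ _ _ x x_lt_n _ x_min.
have n_gt0 : 0 < q ^ 4 - 1 by apply: leq_ltn_trans x_lt_n.
apply: iff_trans (SR_asymmetricE _ _ _) _; rewrite x_min.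
by apply: iff_sym; apply: recip_coset_ltP.
Qed.
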